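(* Let $\Theta\subseteq\mathbb{R}^p$ be convex, let $f:\mathbb{R}^p\to\mathbb{R}$, let $\kappa\in\Theta$, and let $g\in\mathcal{S}_L(f,\kappa)$. Define $h\triangleq g-f$ and let $\theta'\in\operatorname{arg\,min}_{\theta\in\Theta} g(\theta)$. Then for all $\theta\in\Theta$: (i) $|h(\theta)|\le \frac{L}{2}\|\theta-\kappa\|_2^2$; (ii) $f(\theta')\le f(\theta)+\frac{L}{2}\|\theta-\kappa\|_2^2$. If moreover $g\in\mathcal{S}_{L,\rho}(f,\kappa)$, then for all $\theta\in\Theta$: (iii) $f(\theta')+\frac{\rho}{2}\|\theta'-\theta\|_2^2\le f(\theta)+\frac{L}{2}\|\theta-\kappa\|_2^2$.
   Context: First-order surrogates: given a convex set $\Theta\subseteq\mathbb{R}^p$, a function $f:\mathbb{R}^p\to\mathbb{R}$, a point $\kappa$ and $L>0$, a function $g:\mathbb{R}^p\to\mathbb{R}$ belongs to $\mathcal{S}_L(f,\kappa)$ (is a first-order surrogate of $f$ near $\kappa$ in $\Theta$) if (a) (majorization) $g(\theta')\ge f(\theta')$ for all $\theta'\in\operatorname{arg\,min}_{\theta\in\Theta}g(\theta)$, and (b) (smoothness) the approximation error $h\triangleq g-f$ is differentiable on $\mathbb{R}^p$ with $L$-Lipschitz continuous gradient, and $h(\kappa)=0$, $\nabla h(\kappa)=0$. $\mathcal{S}_{L,\rho}(f,\kappa)$ denotes the subset of $\mathcal{S}_L(f,\kappa)$ consisting of $\rho$-strongly convex functions ($\rho>0$). *)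

(* R^p is modelled as row vectors 'rV[R]_p. *)
From HB Require Import structures.
From mathcomp Require Import all_boot all_order all_algebra.
From mathcomp Require Import all_classical all_reals all_analysis.
Set Implicit Arguments. Unset Strict Implicit. Unset Printing Implicit Defensive.
Import Order.TTheory GRing.Theory Num.Theory.
Import numFieldNormedType.Exports.
Local Open Scope classical_set_scope.
Local Open Scope ring_scope.

Section Defs.
Variables (R : realType) (p : nat).

Definition enorm (x : 'rV[R]_p) : R := Num.sqrt (\sum_(i < p) x ord0 i ^+ 2).

Definition convex_setR (Th : set 'rV[R]_p) : Prop :=
  forall x y (t : R), Th x -> Th y -> 0 <= t -> t <= 1 ->
    Th (t *: x + (1 - t) *: y).

Definition grad (h : 'rV[R]_p -> R) (x : 'rV[R]_p) : 'rV[R]_p :=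
  \row_(i < p) ('d h x : 'rV[R]_p -> R) (delta_mx ord0 i).

Definition is_argmin (Th : set 'rV[R]_p) (g : 'rV[R]_p -> R) (th' : 'rV[R]_p) :=
  Th th' /\ forall th, Th th -> g th' <= g th.

Definition first_order_surrogate (Th : set 'rV[R]_p) (L : R)
    (f g : 'rV[R]_p -> R) (kappa : 'rV[R]_p) : Prop :=
  (forall th', is_argmin Th g th' -> f th' <= g th') /\
  let h := fun x => g x - f x in
  (forall x, differentiable h x) /\
  (forall x y, enorm (grad h x - grad h y) <= L * enorm (x - y)) /\
  h kappa = 0 /\ grad h kappa = 0.

Definition strongly_convex (rho : R) (g : 'rV[R]_p -> R) : Prop :=
  forall x y (t : R), 0 <= t -> t <= 1 ->
    g (t *: x + (1 - t) *: y) <=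
      t * g x + (1 - t) * g y - rho / 2 * t * (1 - t) * enorm (x - y) ^+ 2.

End Defs.

(* Along the segment from kappa to theta, the derivative of h = g - f differs
   from its value at kappa (which is 0) by at most L times the distance
   travelled, by the Lipschitz gradient and Cauchy-Schwarz; the mean value
   theorem turns this linear bound on the slope into the quadratic bound
   |h theta| <= L/2 |theta - kappa|^2.  The rest is the chain
   f theta' <= g theta' <= g theta <= f theta + L/2 |theta - kappa|^2, whose
   middle step strong convexity sharpens: since the chord points
   t theta + (1 - t) theta' lie in Theta, minimality of theta' gives
   g theta' + rho/2 (1 - t) |theta' - theta|^2 <= g theta for all t in ]0, 1]. *)

From HB Require Import structures.
From mathcomp Require Import all_boot all_order all_algebra.
From mathcomp Require Import all_classical all_reals all_analysis.
From mathcomp Require Import ring lra.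
Set Implicit Arguments. Unset Strict Implicit. Unset Printing Implicit Defensive.
Import Order.TTheory GRing.Theory Num.Theory.
Import numFieldNormedType.Exports.
Local Open Scope classical_set_scope.
Local Open Scope ring_scope.

Section RealLine.
Variable R : realType.

Lemma deriv_lower_bound_increment (phi phi' : R -> R) (M : R) :
  (forall x : R, is_derive x 1 phi (phi' x)) ->
  (forall s, 0 < s -> - (M * s) <= phi' s) ->
  - (M / 2) <= phi 1 - phi 0.
Proof.
move=> dphi lb.
pose psi s := phi s + M / 2 * (s * s).
have dpsi (x : R) : is_derive x 1 psi (phi' x + M * x).
  have -> : psi = phi + (M / 2) \*: (@id R * id) by [].
  by apply: is_derive_eq; rewrite /GRing.scale /= !mulr1; field.
have cpsi : {within `[0, 1], continuous psi}.
  by apply: derivable_within_continuous => y _; exact: ex_derive.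
have [c /[!in_itv] /= /andP[c0 _]] := MVT ltr01 (fun x _ => dpsi x) cpsi.
have := lb c c0; rewrite /psi; lra.
Qed.

Lemma deriv_bound_increment (phi phi' : R -> R) (M : R) :
  (forall x : R, is_derive x 1 phi (phi' x)) ->
  (forall s, 0 < s -> `|phi' s| <= M * s) ->
  `|phi 1 - phi 0| <= M / 2.
Proof.
move=> dphi bd; rewrite ler_norml; apply/andP; split.
  by apply: (deriv_lower_bound_increment dphi) => s /bd /ler_normlP[+ _]; rewrite lerNl.
have dNphi (x : R) : is_derive x 1 (- phi) (- phi' x) by exact: is_deriveN.
suff : - (M / 2) <= (- phi) 1 - (- phi) 0 by rewrite !fctE; lra.
apply: (deriv_lower_bound_increment dNphi) => s /bd /ler_normlP[_].
by rewrite lerN2.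
Qed.

Lemma ler_of_forall_mulr1B (c d : R) :
  (forall t, 0 < t -> t <= 1 -> c * (1 - t) <= d) -> c <= d.
Proof.
move=> H; apply/ler_addgt0Pr => e e0.
have c0 := normr_ge0 c.
pose t := e / (`|c| + e).
have t0 : 0 < t by rewrite divr_gt0 //; lra.
have t1 : t <= 1 by rewrite ler_pdivrMr; lra.
have ct : c * t <= e.
  apply: le_trans (ler_wpM2r (ltW t0) (ler_norm c)) _.
  by rewrite /t mulrA ler_pdivrMr; nra.
have := H t t0 t1; lra.
Qed.

End RealLine.

Section RowVectors.
Variables (R : realType) (p : nat).
Implicit Types (u v w : 'rV[R]_p) (h : 'rV[R]_p -> R).

Definition dotr u w : R := \sum_(i < p) u ord0 i * w ord0 i.

Lemma dotr_ge0 u : 0 <= dotr u u.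
Proof. by apply: sumr_ge0 => i _; rewrite -expr2 sqr_ge0. Qed.

Lemma dotrBr u v w : dotr u (v - w) = dotr u v - dotr u w.
Proof.
by rewrite /dotr -sumrB; apply: eq_bigr => i _; rewrite !mxE mulrBr.
Qed.

Lemma dotr0 u : dotr u 0 = 0.
Proof. by rewrite /dotr big1 // => i _; rewrite mxE mulr0. Qed.

Lemma enorm_dotr u : enorm u = Num.sqrt (dotr u u).
Proof. by rewrite /enorm; congr Num.sqrt; apply: eq_bigr => i _; rewrite expr2. Qed.

Lemma enormZ (c : R) u : enorm (c *: u) = `|c| * enorm u.
Proof.
rewrite /enorm -sqrtr_sqr -sqrtrM ?sqr_ge0 // mulr_sumr.
by congr Num.sqrt; apply: eq_bigr => i _; rewrite mxE exprMn.
Qed.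

Lemma enorm_distC u v : enorm (u - v) = enorm (v - u).
Proof.
by rewrite -opprB /enorm; congr Num.sqrt; apply: eq_bigr => i _; rewrite mxE sqrrN.
Qed.

Lemma dotr_sqr_le u w : dotr u w ^+ 2 <= dotr u u * dotr w w.
Proof.
pose a i j := (u ord0 i * w ord0 j) ^+ 2.
pose b i j := u ord0 i * w ord0 i * (u ord0 j * w ord0 j).
pose E := \sum_(i < p) \sum_(j < p) (a i j - b i j).
have E_eq : E = dotr u u * dotr w w - dotr u w ^+ 2.
  rewrite /E expr2 /dotr !mulr_suml -sumrB; apply: eq_bigr => i _.
  by rewrite !mulr_sumr -sumrB; apply: eq_bigr => j _; rewrite /a /b exprMn !expr2.
have lagrange : \sum_(i < p) \sum_(j < p) (u ord0 i * w ord0 j - u ord0 j * w ord0 i) ^+ 2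
    = E + E.
  transitivity (E + \sum_(i < p) \sum_(j < p) (a j i - b i j)).
    rewrite /E -big_split; apply: eq_bigr => i _; rewrite -big_split.
    by apply: eq_bigr => j _; rewrite /a /b /=; ring.
  rewrite exchange_big /=; congr (_ + _); apply: eq_bigr => i _.
  by apply: eq_bigr => j _; rewrite /b mulrC.
rewrite -subr_ge0 -E_eq -(pmulr_rge0 _ (ltr0n R 2)) mulr2n mulrDl mul1r -lagrange.
by apply: sumr_ge0 => i _; apply: sumr_ge0 => j _; rewrite sqr_ge0.
Qed.

Lemma cauchy_schwarz_dotr u w : `|dotr u w| <= enorm u * enorm w.
Proof.
rewrite !enorm_dotr -sqrtrM ?dotr_ge0 // -sqrtr_sqr ler_sqrt ?mulr_ge0 ?dotr_ge0 //.
exact: dotr_sqr_le.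
Qed.

Lemma diff_dotr_grad h x v : ('d h x : 'rV[R]_p -> R) v = dotr v (grad h x).
Proof.
rewrite {1}(row_sum_delta v) linear_sum; apply: eq_bigr => i _.
by rewrite linearZ /grad mxE.
Qed.

Lemma is_derive_along_line h v w (t : R) :
  (forall x, differentiable h x) ->
  is_derive t 1 (fun s : R => h (s *: v + w)) (('d h (t *: v + w) : _ -> R) v).
Proof.
move=> dh.
pose l := (fun s : R => s *: v) + cst w.
have dl : is_diff t l (( *:%R^~ v) + 0) by exact: is_diffD.
have -> : (fun s : R => h (s *: v + w)) = h \o l by [].
have dc : differentiable (h \o l) t.
  apply: differentiable_comp; first exact: ex_diff.
  exact: dh.
apply: DeriveDef; first exact: diff_derivable.
rewrite deriveE // diff_comp; [|exact: ex_diff|exact: dh].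
by rewrite diff_val /= addr0 scale1r.
Qed.

Section LipschitzGradient.
Variables (h : 'rV[R]_p -> R) (L : R).
Hypotheses (dh : forall x, differentiable h x)
  (lip : forall x y, enorm (grad h x - grad h y) <= L * enorm (x - y)).

Lemma lipschitz_grad_diff x w v :
  `|('d h x : 'rV[R]_p -> R) v - ('d h w : 'rV[R]_p -> R) v| <= L * enorm (x - w) * enorm v.
Proof.
rewrite [X in `|X - _|]diff_dotr_grad [X in `|_ - X|]diff_dotr_grad -dotrBr.
apply: le_trans (cauchy_schwarz_dotr _ _) _.
by rewrite mulrC; apply: ler_wpM2r; [exact: sqrtr_ge0|exact: lip].
Qed.

Lemma lipschitz_grad_taylor x w :
  `|h x - h w - ('d h w : 'rV[R]_p -> R) (x - w)| <= L / 2 * enorm (x - w) ^+ 2.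
Proof.
set v := x - w; set d := ('d h w : 'rV[R]_p -> R) v.
pose phi (s : R) := h (s *: v + w) - d * s.
have dphi (s : R) : is_derive s 1 phi (('d h (s *: v + w) : _ -> R) v - d).
  have dline := is_derive_along_line v w s dh.
  have -> : phi = (fun s => h (s *: v + w)) - d \*: id by [].
  by apply: is_derive_eq; rewrite /GRing.scale /= mulr1.
have slope s : 0 < s -> `|('d h (s *: v + w) : _ -> R) v - d| <= L * enorm v ^+ 2 * s.
  move=> s0; apply: le_trans (lipschitz_grad_diff _ _ _) _.
  by rewrite addrK enormZ gtr0_norm // (mulrC s) expr2 !mulrA mulrAC.
have := deriv_bound_increment dphi slope.
rewrite /phi scale1r scale0r add0r mulr1 mulr0 subr0 subrK.
by rewrite addrAC mulrAC.
Qed.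

End LipschitzGradient.

Lemma strongly_convex_argmin_growth (Th : set 'rV[R]_p) g (rho : R) th' th :
  convex_setR Th -> strongly_convex rho g -> is_argmin Th g th' -> Th th ->
  g th' + rho / 2 * enorm (th' - th) ^+ 2 <= g th.
Proof.
move=> cvx sc [Th' min_th'] Tth; rewrite addrC -lerBrDr enorm_distC.
apply: ler_of_forall_mulr1B => t t0 t1.
have := min_th' _ (cvx th th' t Tth Th' (ltW t0) t1).
have := sc th th' t (ltW t0) t1.
move=> sc_t min_t; rewrite -(ler_pM2l t0); lra.
Qed.

End RowVectors.

Theorem lemma2p1 (R : realType) (p : nat) (Th : set 'rV[R]_p)
    (f g : 'rV[R]_p -> R) (kappa : 'rV[R]_p) (L : R) (th' : 'rV[R]_p) :
  convex_setR Th -> Th kappa -> 0 < L ->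
  first_order_surrogate Th L f g kappa ->
  is_argmin Th g th' ->
  (forall th, Th th ->
     `| g th - f th | <= L / 2 * enorm (th - kappa) ^+ 2 /\
     f th' <= f th + L / 2 * enorm (th - kappa) ^+ 2) /\
  (forall rho : R, 0 < rho -> strongly_convex rho g ->
     forall th, Th th ->
       f th' + rho / 2 * enorm (th' - th) ^+ 2
         <= f th + L / 2 * enorm (th - kappa) ^+ 2).
Proof.
move=> cvx _ _ [majorizes [dh [lip [h_kappa grad_kappa]]]] argmin_th'.
have h_bound th : `|g th - f th| <= L / 2 * enorm (th - kappa) ^+ 2.
  have := lipschitz_grad_taylor dh lip th kappa.
  by rewrite /= h_kappa [X in _ - X]diff_dotr_grad grad_kappa dotr0 !subr0.
have h_le th : g th - f th <= L / 2 * enorm (th - kappa) ^+ 2.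
  exact: le_trans (ler_norm _) (h_bound th).
have f_le_g := majorizes th' argmin_th'.
split=> [th Tth | rho _ sc th Tth].
  split; first exact: h_bound.
  have := h_le th; have := argmin_th'.2 th Tth; lra.
have := strongly_convex_argmin_growth cvx sc argmin_th' Tth.
have := h_le th; lra.
Qed.
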